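(* Let $\alpha\ge\tfrac12$. Define $g_1=\frac1{\omega_1}\mathbf{1}_{[0,1)}*_\alpha\mathbf{1}_{[0,2]}$ and, for $n\ge2$, $g_n=\frac1{\omega_1}\mathbf{1}_{[0,1)}*_\alpha\mathbf{1}_{[n-2,n+1]}$. Then for every $n\ge1$, $g_n(x)=1$ for all $x\in[n-1,n)$.
   Context: Fix $\alpha\geq\tfrac12$. The Bessel–Kingman hypergroup is $(\mathbb{R}_+,*_\alpha)$ with Haar measure $\omega_\alpha(dz)=z^{2\alpha+1}dz$ and, for $x,y>0$, $\varepsilon_x*_\alpha\varepsilon_y(f)=\int_{|x-y|}^{x+y}K_\alpha(x,y,z)f(z)z^{2\alpha+1}dz$ with $K_\alpha(x,y,z)=C_\Gamma\frac{[(z^2-(x-y)^2)((x+y)^2-z^2)]^{\alpha-1/2}}{(xyz)^{2\alpha}}$, $C_\Gamma=\frac{\Gamma(\alpha+1)}{\Gamma(1/2)\Gamma(\alpha+1/2)2^{2\alpha-1}}$; $\varepsilon_0$ is the identity; $\varepsilon_x*_\alpha\varepsilon_y$ is a probability measure. Translation: $\tau_xf(y)=\varepsilon_x*_\alpha\varepsilon_y(f)$; convolution of functions: $f_1*_\alpha f_2(x)=\int_{\mathbb{R}_+}f_1(y)\,\tau_xf_2(y)\,d\omega_\alpha(y)$. $\omega_1=\omega_\alpha([0,1))$. *)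

From Stdlib Require Import Reals Lra ClassicalEpsilon.
Open Scope R_scope.

(* Real power with the conventions a^b = exp(b ln a) for a > 0,
   0^0 = 1, and 0 otherwise (only used with b >= 0). *)
Definition rpow (a b : R) : R :=
  if Rlt_dec 0 a then Rpower a b
  else if Req_dec_T b 0 then 1 else 0.

(* Total Riemann integral on [a,b]: the Riemann integral when f is
   Riemann integrable on [a,b], and 0 otherwise. *)
Definition Int (f : R -> R) (a b : R) : R :=
  match excluded_middle_informative (exists _ : Riemann_integrable f a b, True) with
  | left H => RiemannInt (proj1_sig (constructive_indefinite_description _ H))
  | right _ => 0
  end.

Definition improper_0_inf (f : R -> R) (L : R) : Prop :=
  forall eps, 0 < eps -> exists d, 0 < d /\ exists M,
    forall a T, 0 < a < d -> M < T -> Rabs (Int f a T - L) < eps.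

Definition IntR_plus (f : R -> R) : R :=
  epsilon (inhabits 0) (fun L => improper_0_inf f L).

Definition Gamma (s : R) : R :=
  IntR_plus (fun t => rpow t (s - 1) * exp (- t)).

Definition CGamma (alpha : R) : R :=
  Gamma (alpha + 1) / (Gamma (1/2) * Gamma (alpha + 1/2) * rpow 2 (2*alpha - 1)).

Definition Kker (alpha x y z : R) : R :=
  CGamma alpha *
  rpow ((z^2 - (x - y)^2) * ((x + y)^2 - z^2)) (alpha - 1/2)
  / rpow (x * y * z) (2 * alpha).

(* Generalized translation: tau_x f (y) = (eps_x *_alpha eps_y)(f),
   with eps_0 the identity. *)
Definition tau (alpha : R) (f : R -> R) (x y : R) : R :=
  if Req_dec_T x 0 then f y
  else if Req_dec_T y 0 then f x
  else Int (fun z => Kker alpha x y z * f z * rpow z (2 * alpha + 1))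
           (Rabs (x - y)) (x + y).

Definition conv (alpha : R) (f1 f2 : R -> R) (x : R) : R :=
  IntR_plus (fun y => f1 y * tau alpha f2 x y * rpow y (2 * alpha + 1)).

Definition omega1 (alpha : R) : R :=
  Int (fun z => rpow z (2 * alpha + 1)) 0 1.

Definition ind_co (a b y : R) : R :=
  if Rle_dec a y then (if Rlt_dec y b then 1 else 0) else 0.
Definition ind_cc (a b y : R) : R :=
  if Rle_dec a y then (if Rle_dec y b then 1 else 0) else 0.

Definition g (alpha : R) (n : nat) : R -> R :=
  match n with
  | 1%nat => conv alpha (fun y => / omega1 alpha * ind_co 0 1 y) (ind_cc 0 2)
  | _ => conv alpha (fun y => / omega1 alpha * ind_co 0 1 y)
                    (ind_cc (INR n - 2) (INR n + 1))
  end.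

(* For x in [n-1, n) and y in (0, 1) the support [|x-y|, x+y] of
   eps_x *_alpha eps_y lies in the interval where the indicator equals 1, so
   tau_x of the indicator at y is the total mass of eps_x *_alpha eps_y, and
   g_n(x) = omega_1^-1 int_0^1 y^(2 alpha + 1) dy = 1.

   The substance is that eps_x *_alpha eps_y is a probability measure.  The
   substitution z^2 = (x-y)^2 + 4xy s turns its mass into
   C_Gamma 2^(2 alpha) U(alpha) with U(b) = int_0^1 (4s(1-s))^(b - 1/2) ds.
   Instead of evaluating U through Beta integrals we show that
   R(b) = 2 Gamma(b+1) U(b) / Gamma(b+1/2) is constant: integration by parts
   gives U(b+1) = (2b+1)/(2b+2) U(b), so R is 1-periodic with
   R(1/2) = Gamma(1/2), and the log-convexity of Gamma squeezes
   R(b+k) / R(1/2+k) to 1 as k -> oo. *)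

From Pilot Require Import Defs.
From Stdlib Require Import Reals Lra Lia ClassicalEpsilon Classical.
From Coquelicot Require Import Coquelicot.
(* Coquelicot also defines [Int]. *)
Import Pilot.Defs.
Open Scope R_scope.

(** * Riemann integrals *)

Lemma Int_RInt f a b : ex_RInt f a b -> Int f a b = RInt f a b.
Proof.
  intros H. unfold Int.
  destruct excluded_middle_informative as [H1|H1].
  - symmetry; apply RInt_Reals.
  - exfalso; apply H1. exists (ex_RInt_Reals_0 _ _ _ H). exact I.
Qed.

Lemma Int_ext_RInt f g a b : a <= b -> ex_RInt g a b ->
  (forall z, a <= z <= b -> f z = g z) -> Int f a b = RInt g a b.
Proof.
  intros Hab Hg Hfg.
  assert (Hfg' : forall z, Rmin a b < z < Rmax a b -> g z = f z).
  { rewrite Rmin_left, Rmax_right by lra. intros z Hz; symmetry; apply Hfg; lra. }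
  rewrite Int_RInt by exact (ex_RInt_ext _ _ _ _ Hfg' Hg).
  symmetry; apply RInt_ext, Hfg'.
Qed.

Lemma ex_derive_cont (f : R -> R) x : ex_derive f x -> continuous f x.
Proof. apply (ex_derive_continuous (K:=R_AbsRing) (V:=R_NormedModule)). Qed.

Lemma ex_RInt_cont (f : R -> R) a b :
  (forall z, Rmin a b <= z <= Rmax a b -> continuous f z) -> ex_RInt f a b.
Proof. apply (ex_RInt_continuous (V:=R_CompleteNormedModule)). Qed.

Lemma RInt_Chasles_R (f : R -> R) a b c :
  ex_RInt f a b -> ex_RInt f b c -> RInt f a b + RInt f b c = RInt f a c.
Proof. apply (RInt_Chasles (V:=R_CompleteNormedModule)). Qed.

Lemma RInt_Chasles3 (f : R -> R) a b c d :
  ex_RInt f a b -> ex_RInt f b c -> ex_RInt f c d ->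
  RInt f a d = RInt f a b + RInt f b c + RInt f c d.
Proof.
  intros H1 H2 H3.
  rewrite <- (RInt_Chasles_R f a c d); [|eapply ex_RInt_Chasles; eauto|auto].
  rewrite <- (RInt_Chasles_R f a b c); auto.
Qed.

Lemma RInt_lincomb (f g : R -> R) a b c d : ex_RInt f a b -> ex_RInt g a b ->
  RInt (fun t => c * f t + d * g t) a b = c * RInt f a b + d * RInt g a b.
Proof.
  intros Hf Hg.
  rewrite (RInt_plus (fun t => c * f t) (fun t => d * g t)).
  - rewrite (RInt_scal g), (RInt_scal f); auto.
  - apply (ex_RInt_scal f); auto.
  - apply (ex_RInt_scal g); auto.
Qed.

Lemma ex_RInt_lincomb (f g : R -> R) a b c d : ex_RInt f a b -> ex_RInt g a b ->
  ex_RInt (fun t => c * f t + d * g t) a b.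
Proof.
  intros Hf Hg.
  apply (ex_RInt_plus (fun t => c * f t) (fun t => d * g t)).
  - apply (ex_RInt_scal f); auto.
  - apply (ex_RInt_scal g); auto.
Qed.

Lemma RInt_derive_R (F f : R -> R) a b :
  (forall x, Rmin a b <= x <= Rmax a b -> is_derive F x (f x)) ->
  (forall x, Rmin a b <= x <= Rmax a b -> continuous f x) ->
  RInt f a b = F b - F a.
Proof. intros HF Hf. apply is_RInt_unique, (is_RInt_derive F); auto. Qed.

Lemma is_derive_RInt_R (f : R -> R) a x : (forall y, continuous f y) ->
  is_derive (fun t => RInt f a t) x (f x).
Proof.
  intros Hf. apply (is_derive_RInt f (fun t => RInt f a t) a); [|apply Hf].
  apply filter_forall. intros t.
  apply (RInt_correct (V:=R_CompleteNormedModule)), ex_RInt_cont; auto.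
Qed.

(* The mean value theorem applied to [RInt f a _ - F]. *)
Lemma RInt_derive_interior (F f : R -> R) a b : a <= b ->
  (forall x, a < x < b -> is_derive F x (f x)) ->
  (forall x, a <= x <= b -> continuous F x) ->
  (forall x, continuous f x) ->
  RInt f a b = F b - F a.
Proof.
  intros Hab HF HFc Hf.
  destruct (MVT_gen (fun t => RInt f a t - F t) a b (fun _ => 0)) as [c [_ Hc]].
  - rewrite Rmin_left, Rmax_right by lra. intros x Hx.
    replace 0 with (f x - f x) by ring.
    apply (is_derive_minus (fun t => RInt f a t) F); auto using is_derive_RInt_R.
  - rewrite Rmin_left, Rmax_right by lra. intros x Hx.
    apply continuity_pt_filterlim.
    apply (continuous_minus (fun t => RInt f a t) F); [|auto].
    apply ex_derive_cont; eexists; apply is_derive_RInt_R, Hf.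
  - rewrite RInt_point in Hc. change (zero : R) with 0 in Hc. lra.
Qed.

(** * Real powers *)

Lemma rpow_pos a b : 0 < a -> rpow a b = Rpower a b.
Proof. intros H; unfold rpow; destruct (Rlt_dec 0 a); [auto|lra]. Qed.

Lemma rpow_nonpos a b : a <= 0 -> b <> 0 -> rpow a b = 0.
Proof.
  intros H H'; unfold rpow; destruct (Rlt_dec 0 a); [lra|].
  destruct (Req_dec_T b 0); [contradiction|auto].
Qed.

Lemma rpow_0r a : rpow a 0 = 1.
Proof.
  unfold rpow; destruct (Rlt_dec 0 a); [apply Rpower_O; auto|].
  destruct (Req_dec_T 0 0); [auto|congruence].
Qed.

Lemma exp_le x y : x <= y -> exp x <= exp y.
Proof. intros [H|<-]; [left; apply exp_increasing; auto|lra]. Qed.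

Lemma exp_le_1 x : x <= 0 -> exp x <= 1.
Proof. intros H. rewrite <- exp_0. apply exp_le, H. Qed.

Lemma Rpower_pos a b : 0 < Rpower a b.
Proof. apply exp_pos. Qed.

Lemma Rpower_1_l s : Rpower 1 s = 1.
Proof. unfold Rpower; rewrite ln_1, Rmult_0_r; apply exp_0. Qed.

Lemma Rpower_lt_of_lt_root s eps a : 0 < s -> 0 < eps ->
  0 < a < Rpower eps (/ s) -> Rpower a s < eps.
Proof.
  intros Hs He Ha.
  replace eps with (Rpower (Rpower eps (/ s)) s).
  - apply Rlt_Rpower_l; auto.
  - rewrite Rpower_mult, Rinv_l by lra. apply Rpower_1; auto.
Qed.

Lemma Rpower_pred a b : 0 < a -> Rpower a b = a * Rpower a (b - 1).
Proof. intros Ha. rewrite <- (Rpower_1 a Ha) at 2. rewrite <- Rpower_plus. f_equal; ring. Qed.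

Lemma rpow_mult_distr_l k w q : 0 < k -> 0 <= q -> rpow (k * w) q = Rpower k q * rpow w q.
Proof.
  intros Hk Hq. destruct (Rlt_dec 0 w) as [Hw|Hw].
  - rewrite !rpow_pos by nra. symmetry; apply Rpower_mult_distr; auto.
  - destruct (Req_dec q 0) as [->|Hq0].
    + rewrite !rpow_0r, Rpower_O by auto; ring.
    + rewrite !rpow_nonpos by nra; ring.
Qed.

Lemma Rpower_sqr t q : 0 < t -> Rpower (t ^ 2) q = Rpower t (2 * q).
Proof.
  intros Ht. rewrite <- (Rpower_pow 2 t Ht), Rpower_mult. f_equal; simpl; ring.
Qed.

Lemma continuous_rpow q w : 0 <= q -> continuous (fun w => rpow w q) w.
Proof.
  intros Hq. destruct (Req_dec q 0) as [->|Nq].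
  { apply continuous_ext with (fun _ => 1); [|apply continuous_const].
    intros; symmetry; apply rpow_0r. }
  destruct (Rtotal_order 0 w) as [Hw|[<-|Hw]].
  - apply continuous_ext_loc with (fun w => Rpower w q).
    + exists (mkposreal w Hw). intros y Hy. change (Rabs (y - w) < w) in Hy.
      apply Rabs_def2 in Hy. rewrite rpow_pos; auto; lra.
    + apply ex_derive_cont. eexists. apply is_derive_Reals; apply derivable_pt_lim_power; auto.
  - apply continuity_pt_filterlim. intros eps Heps.
    exists (Rpower eps (/ q)). split; [apply Rpower_pos|]. intros y [_ Hy].
    simpl in *. unfold R_dist in *. rewrite (rpow_nonpos 0), !Rminus_0_r in * by lra.
    destruct (Rlt_dec 0 y) as [Hy0|Hy0].
    + rewrite rpow_pos, Rabs_pos_eq by (try left; auto using Rpower_pos).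
      rewrite Rabs_pos_eq in Hy by lra. apply Rpower_lt_of_lt_root; auto; lra.
    + rewrite rpow_nonpos, Rabs_R0 by lra. exact Heps.
  - apply continuous_ext_loc with (fun _ => 0); [|apply continuous_const].
    exists (mkposreal (- w) ltac:(lra)). intros y Hy.
    change (Rabs (y - w) < - w) in Hy. apply Rabs_def2 in Hy.
    rewrite rpow_nonpos; auto; lra.
Qed.

(** * Improper integrals over (0, +oo) *)

(* [improper_0_inf f L] unfolds to
   [forall eps, 0 < eps -> near_0_inf (fun a T => Rabs (Int f a T - L) < eps)]. *)
Definition near_0_inf (P : R -> R -> Prop) : Prop :=
  exists d, 0 < d /\ exists M, forall a T, 0 < a < d -> M < T -> P a T.

Lemma near_0_inf_window c C : 0 < c -> near_0_inf (fun a T => a < c /\ C < T).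
Proof. intros Hc. exists c; split; auto. exists C. intros a T Ha HT; lra. Qed.

Lemma near_0_inf_and P Q :
  near_0_inf P -> near_0_inf Q -> near_0_inf (fun a T => P a T /\ Q a T).
Proof.
  intros [d1 [Hd1 [M1 H1]]] [d2 [Hd2 [M2 H2]]].
  exists (Rmin d1 d2); split; [apply Rmin_glb_lt; auto|].
  exists (Rmax M1 M2). intros a T Ha HT.
  pose proof (Rmin_l d1 d2); pose proof (Rmin_r d1 d2).
  pose proof (Rmax_l M1 M2); pose proof (Rmax_r M1 M2).
  split; [apply H1|apply H2]; lra.
Qed.

Lemma near_0_inf_impl (P Q : R -> R -> Prop) :
  (forall a T, 0 < a -> P a T -> Q a T) -> near_0_inf P -> near_0_inf Q.
Proof.
  intros HPQ [d [Hd [M H]]]. exists d; split; auto. exists M.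
  intros a T Ha HT. apply HPQ; [lra|auto].
Qed.

Lemma near_0_inf_ex P : near_0_inf P -> exists a T, 0 < a /\ P a T.
Proof.
  intros [d [Hd [M H]]]. exists (d / 2), (M + 1). split; [lra|apply H; lra].
Qed.

Lemma improper_0_inf_unique f L1 L2 :
  improper_0_inf f L1 -> improper_0_inf f L2 -> L1 = L2.
Proof.
  intros H1 H2. destruct (Req_dec L1 L2) as [|N]; auto. exfalso.
  assert (He : 0 < Rabs (L1 - L2) / 2) by (pose proof (Rabs_pos_lt (L1 - L2)); lra).
  destruct (near_0_inf_ex _ (near_0_inf_and _ _ (H1 _ He) (H2 _ He)))
    as [a [T [_ [Ha1 Ha2]]]].
  assert (Rabs (L1 - L2) <= Rabs (Int f a T - L1) + Rabs (Int f a T - L2)); [|lra].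
  replace (L1 - L2) with (- (Int f a T - L1) + (Int f a T - L2)) by ring.
  rewrite <- (Rabs_Ropp (Int f a T - L1)). apply Rabs_triang.
Qed.

Lemma IntR_plus_eq f L : improper_0_inf f L -> IntR_plus f = L.
Proof.
  intros H. unfold IntR_plus. apply improper_0_inf_unique with f; auto.
  apply epsilon_spec. exists L; exact H.
Qed.

Lemma ex_RInt_pos (f : R -> R) a b :
  (forall t, 0 < t -> continuous f t) -> 0 < a -> 0 < b -> ex_RInt f a b.
Proof.
  intros Hc Ha Hb. apply ex_RInt_cont. intros z Hz. apply Hc.
  pose proof (Rmin_glb_lt a b 0 Ha Hb). lra.
Qed.

(* The limit is the supremum of the window integrals. *)
Lemma improper_0_inf_nonneg_bounded f B :
  (forall t, 0 < t -> continuous f t) -> (forall t, 0 < t -> 0 <= f t) ->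
  (forall a T, 0 < a -> a <= T -> RInt f a T <= B) ->
  exists L, improper_0_inf f L /\ (forall a T, 0 < a -> a <= T -> RInt f a T <= L).
Proof.
  intros Hc Hp HB.
  set (E := fun v => exists a T, 0 < a /\ a <= T /\ v = RInt f a T).
  assert (Hb : bound E) by (exists B; intros v [a [T [Ha [HaT ->]]]]; apply HB; auto).
  assert (He : exists v, E v) by (exists (RInt f 1 1), 1, 1; repeat split; lra).
  destruct (completeness E Hb He) as [L [HL1 HL2]].
  assert (Hle : forall a T, 0 < a -> a <= T -> RInt f a T <= L)
    by (intros a T Ha HaT; apply HL1; exists a, T; auto).
  exists L; split; auto.
  intros eps Heps.
  destruct (classic (exists v, E v /\ L - eps < v)) as [[v [[a0 [T0 [Ha0 [HaT0 ->]]]] Hv]]|Hn].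
  - exists a0; split; auto. exists T0. intros a T Ha HT.
    assert (Hex : forall u v, 0 < u -> 0 < v -> ex_RInt f u v) by (intros; apply ex_RInt_pos; auto).
    rewrite Int_RInt by (apply Hex; lra).
    assert (RInt f a T <= L) by (apply Hle; lra).
    rewrite (RInt_Chasles3 f a a0 T0 T) in * by (apply Hex; lra).
    assert (0 <= RInt f a a0) by (apply RInt_ge_0; [lra|apply Hex; lra|intros; apply Hp; lra]).
    assert (0 <= RInt f T0 T) by (apply RInt_ge_0; [lra|apply Hex; lra|intros; apply Hp; lra]).
    apply Rabs_def1; lra.
  - exfalso. assert (L <= L - eps); [|lra].
    apply HL2. intros v Hv. apply Rnot_lt_le. intros Hlt. apply Hn. exists v; auto.
Qed.

Lemma improper_0_inf_le_lincomb f g h Lf Lg Lh c1 c2 :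
  0 <= c1 -> 0 <= c2 ->
  improper_0_inf f Lf -> improper_0_inf g Lg -> improper_0_inf h Lh ->
  (forall a T, 0 < a < 1 -> 1 < T -> Int f a T <= c1 * Int g a T + c2 * Int h a T) ->
  Lf <= c1 * Lg + c2 * Lh.
Proof.
  intros H1 H2 Hf Hg Hh Hle.
  apply Rnot_lt_le; intros Hlt.
  set (e := (Lf - (c1 * Lg + c2 * Lh)) / (2 * (1 + c1 + c2))).
  assert (He : 0 < e) by (unfold e; apply Rdiv_lt_0_compat; lra).
  destruct (near_0_inf_ex _ (near_0_inf_and _ _ (near_0_inf_window 1 1 Rlt_0_1)
     (near_0_inf_and _ _ (Hf e He) (near_0_inf_and _ _ (Hg e He) (Hh e He)))))
    as [a [T [Ha [HaT [Ef [Eg Eh]]]]]].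
  specialize (Hle a T ltac:(lra) ltac:(lra)).
  apply Rabs_def2 in Ef, Eg, Eh.
  assert (c1 * Int g a T <= c1 * (Lg + e)) by (apply Rmult_le_compat_l; lra).
  assert (c2 * Int h a T <= c2 * (Lh + e)) by (apply Rmult_le_compat_l; lra).
  assert (Hgap : Lf - (c1 * Lg + c2 * Lh) < (1 + c1 + c2) * e) by lra.
  replace ((1 + c1 + c2) * e) with ((Lf - (c1 * Lg + c2 * Lh)) / 2) in Hgap
    by (unfold e; field; lra).
  lra.
Qed.

Lemma RInt_cut_off f h a c T : a <= c <= T -> ex_RInt h a c ->
  (forall y, a < y < c -> f y = h y) -> (forall y, c <= y -> f y = 0) ->
  ex_RInt f a T /\ RInt f a T = RInt h a c.
Proof.
  intros Hac Hh Hfh Hf0.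
  assert (E1 : forall y, Rmin a c < y < Rmax a c -> h y = f y)
    by (rewrite Rmin_left, Rmax_right by lra; intros; symmetry; apply Hfh; lra).
  assert (E2 : forall y, Rmin c T < y < Rmax c T -> 0 = f y)
    by (rewrite Rmin_left, Rmax_right by lra; intros; symmetry; apply Hf0; lra).
  assert (Ex1 : ex_RInt f a c) by (apply (ex_RInt_ext h); auto).
  assert (Ex2 : ex_RInt f c T)
    by (apply (ex_RInt_ext (fun _ => 0)); [auto|apply (ex_RInt_const (V:=R_NormedModule))]).
  split; [eapply ex_RInt_Chasles; eauto|].
  rewrite <- (RInt_Chasles_R f a c T), <- (RInt_ext _ _ _ _ E1), <- (RInt_ext _ _ _ _ E2) by auto.
  rewrite (RInt_const (V:=R_CompleteNormedModule)).
  change (scal (T - c) 0) with ((T - c) * 0). rewrite Rmult_0_r, Rplus_0_r. reflexivity.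
Qed.

Lemma improper_0_inf_compact_support f h c L : 0 < c ->
  (forall y, continuous h y) -> RInt h 0 c = L ->
  (forall y, 0 < y < c -> f y = h y) -> (forall y, c <= y -> f y = 0) ->
  improper_0_inf f L.
Proof.
  intros Hc Hh <- Hfh Hf0 eps Heps.
  assert (H0 : continuity_pt (fun t => RInt h 0 t) 0).
  { apply continuity_pt_filterlim, ex_derive_cont. eexists. apply is_derive_RInt_R, Hh. }
  destruct (H0 eps Heps) as [d [Hd Hnear]].
  exists (Rmin c d); split; [apply Rmin_glb_lt; auto|]. exists c.
  intros a T Ha HT. pose proof (Rmin_l c d); pose proof (Rmin_r c d).
  assert (Hex : forall u v, ex_RInt h u v) by (intros; apply ex_RInt_cont; auto).
  destruct (RInt_cut_off f h a c T) as [HfT Hcut]; auto; try lra.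
  { intros y Hy; apply Hfh; lra. }
  rewrite Int_RInt, Hcut by auto.
  rewrite <- (RInt_Chasles_R h 0 a c) by auto.
  replace (RInt h a c - (RInt h 0 a + RInt h a c)) with (- (RInt h 0 a - RInt h 0 0))
    by (rewrite RInt_point; change (zero : R) with 0; ring).
  rewrite Rabs_Ropp. apply (Hnear a). split; [split; [exact I|lra]|].
  simpl; unfold R_dist. rewrite Rminus_0_r, Rabs_pos_eq; lra.
Qed.

(** * The Gamma function *)

Definition gamma_integrand s t := rpow t (s - 1) * exp (- t).

Lemma gamma_integrand_Rpower s t : 0 < t -> gamma_integrand s t = Rpower t (s - 1) * exp (- t).
Proof. intros; unfold gamma_integrand; rewrite rpow_pos; auto. Qed.

Lemma gamma_integrand_gt_0 s t : 0 < t -> 0 < gamma_integrand s t.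
Proof.
  intros; rewrite gamma_integrand_Rpower; auto.
  apply Rmult_lt_0_compat; [apply Rpower_pos|apply exp_pos].
Qed.

Lemma continuous_gamma_integrand s t : 0 < t -> continuous (gamma_integrand s) t.
Proof.
  intros Ht. apply continuous_ext_loc with (fun t => Rpower t (s - 1) * exp (- t)).
  - exists (mkposreal t Ht). intros y Hy. change (Rabs (y - t) < t) in Hy.
    apply Rabs_def2 in Hy. rewrite gamma_integrand_Rpower; auto; lra.
  - apply ex_derive_cont. unfold Rpower. auto_derive. lra.
Qed.

Lemma ex_RInt_gamma_integrand s a T : 0 < a -> 0 < T -> ex_RInt (gamma_integrand s) a T.
Proof. apply ex_RInt_pos, continuous_gamma_integrand. Qed.

Lemma ln_le_2sqrt t : 1 <= t -> ln t <= 2 * sqrt t.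
Proof.
  intros Ht. assert (Hs : 0 < sqrt t) by (apply sqrt_lt_R0; lra).
  rewrite <- (sqrt_sqrt t) at 1 by lra. rewrite ln_mult by auto.
  pose proof (exp_ineq1_le (ln (sqrt t))). rewrite exp_ln in H; auto. lra.
Qed.

Lemma Rpower_le_exp_half c t : 1 <= t -> Rpower t c <= exp (t / 2 + 2 * c ^ 2).
Proof.
  intros Ht. unfold Rpower. apply exp_le.
  assert (Hl : 0 <= ln t) by (rewrite <- ln_1; apply ln_le; lra).
  destruct (Rle_dec c 0) as [Hc|Hc]; [nra|].
  pose proof (ln_le_2sqrt t Ht). pose proof (sqrt_sqrt t ltac:(lra)).
  assert (c * ln t <= c * (2 * sqrt t)) by (apply Rmult_le_compat_l; lra).
  pose proof (pow2_ge_0 (sqrt t - 2 * c)). nra.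
Qed.

Lemma RInt_gamma_integrand_0_1 s a : 0 < s -> 0 < a <= 1 ->
  RInt (gamma_integrand s) a 1 <= 1 / s.
Proof.
  intros Hs Ha.
  assert (HD : forall t, 0 < t -> is_derive (fun t => / s * Rpower t s) t (Rpower t (s - 1))).
  { intros t Ht. replace (Rpower t (s - 1)) with (/ s * (s * Rpower t (s - 1))) by (field; lra).
    apply (is_derive_scal (fun t => Rpower t s)).
    apply is_derive_Reals; apply derivable_pt_lim_power; auto. }
  apply Rle_trans with (RInt (fun t => Rpower t (s - 1)) a 1).
  - apply RInt_le; try lra.
    + apply ex_RInt_gamma_integrand; lra.
    + apply ex_RInt_pos; try lra. intros t Ht; apply ex_derive_cont; eexists.
      apply is_derive_Reals; apply derivable_pt_lim_power; auto.
    + intros x Hx. rewrite gamma_integrand_Rpower by lra.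
      assert (exp (- x) <= 1) by (apply exp_le_1; lra).
      pose proof (Rpower_pos x (s - 1)). nra.
  - rewrite (RInt_derive_R (fun t => / s * Rpower t s)).
    + rewrite Rpower_1_l. pose proof (Rpower_pos a s).
      apply Rmult_le_reg_l with s; auto. field_simplify; lra.
    + intros x Hx. rewrite Rmin_left, Rmax_right in Hx by lra. apply HD; lra.
    + intros x Hx. rewrite Rmin_left, Rmax_right in Hx by lra.
      apply ex_derive_cont; eexists; apply is_derive_Reals; apply derivable_pt_lim_power; lra.
Qed.

Lemma RInt_gamma_integrand_1_T s T : 1 <= T ->
  RInt (gamma_integrand s) 1 T <= 2 * exp (2 * (s - 1) ^ 2).
Proof.
  intros HT. set (K := exp (2 * (s - 1) ^ 2)).
  assert (HK : 0 < K) by apply exp_pos.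
  apply Rle_trans with (RInt (fun t => K * exp (- t / 2)) 1 T).
  - apply RInt_le; auto.
    + apply ex_RInt_gamma_integrand; lra.
    + apply ex_RInt_cont; intros; apply ex_derive_cont; auto_derive; auto.
    + intros x Hx. rewrite gamma_integrand_Rpower by lra.
      replace (K * exp (- x / 2)) with (exp (x / 2 + 2 * (s - 1) ^ 2) * exp (- x))
        by (unfold K; rewrite <- !exp_plus; f_equal; field).
      apply Rmult_le_compat_r; [left; apply exp_pos|apply Rpower_le_exp_half; lra].
  - rewrite (RInt_derive_R (fun t => - 2 * K * exp (- t / 2))).
    + assert (exp (- (1) / 2) <= 1) by (apply exp_le_1; lra).
      pose proof (exp_pos (- (1) / 2)). pose proof (exp_pos (- T / 2)). nra.
    + intros x Hx. auto_derive; auto. unfold Rdiv; field.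
    + intros x Hx; apply ex_derive_cont; auto_derive; auto.
Qed.

Lemma Gamma_improper s : 0 < s ->
  improper_0_inf (gamma_integrand s) (Gamma s) /\
  (forall a T, 0 < a -> a <= T -> RInt (gamma_integrand s) a T <= Gamma s).
Proof.
  intros Hs.
  destruct (improper_0_inf_nonneg_bounded (gamma_integrand s) (1 / s + 2 * exp (2 * (s - 1) ^ 2)))
    as [L [H1 H2]].
  - apply continuous_gamma_integrand.
  - intros; left; apply gamma_integrand_gt_0; auto.
  - intros a T Ha HaT.
    set (a' := Rmin a 1). set (T' := Rmax T 1).
    assert (Ha' : 0 < a' <= a /\ a' <= 1)
      by (unfold a'; pose proof (Rmin_l a 1); pose proof (Rmin_r a 1);
          pose proof (Rmin_glb_lt a 1 0 Ha Rlt_0_1); lra).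
    assert (HT' : T <= T' /\ 1 <= T')
      by (unfold T'; pose proof (Rmax_l T 1); pose proof (Rmax_r T 1); lra).
    assert (Hex : forall u v, 0 < u -> 0 < v -> ex_RInt (gamma_integrand s) u v)
      by (intros; apply ex_RInt_gamma_integrand; auto).
    assert (Hpos : forall u v, 0 < u <= v -> 0 <= RInt (gamma_integrand s) u v)
      by (intros; apply RInt_ge_0; [lra|apply Hex; lra|];
          intros; left; apply gamma_integrand_gt_0; lra).
    assert (Hwide : RInt (gamma_integrand s) a T <= RInt (gamma_integrand s) a' T').
    { rewrite (RInt_Chasles3 _ a' a T T') by (apply Hex; lra).
      pose proof (Hpos a' a ltac:(lra)). pose proof (Hpos T T' ltac:(lra)). lra. }
    rewrite <- (RInt_Chasles_R _ a' 1 T') in Hwide by (apply Hex; lra).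
    pose proof (RInt_gamma_integrand_0_1 s a' Hs ltac:(lra)).
    pose proof (RInt_gamma_integrand_1_T s T' ltac:(lra)). lra.
  - unfold Gamma. fold (gamma_integrand s). rewrite (IntR_plus_eq _ L H1). auto.
Qed.

Lemma Gamma_gt_0 s : 0 < s -> 0 < Gamma s.
Proof.
  intros Hs. apply Rlt_le_trans with (RInt (gamma_integrand s) 1 2).
  - apply RInt_gt_0; [lra|intros; apply gamma_integrand_gt_0; lra|].
    intros; apply continuous_gamma_integrand; lra.
  - apply (proj2 (Gamma_improper s Hs)); lra.
Qed.

(* Integration by parts on a window: the boundary terms of
   [- t^s e^{-t}] are what separates [Gamma (s + 1)] from [s * Gamma s]. *)
Lemma RInt_gamma_integrand_succ s a T : 0 < s -> 0 < a -> 0 < T ->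
  RInt (gamma_integrand (s + 1)) a T =
  s * RInt (gamma_integrand s) a T + (Rpower a s * exp (- a) - Rpower T s * exp (- T)).
Proof.
  intros Hs Ha HT.
  assert (Hmin : 0 < Rmin a T) by (apply Rmin_glb_lt; auto).
  assert (Hex : forall u, ex_RInt (gamma_integrand u) a T)
    by (intros; apply ex_RInt_gamma_integrand; auto).
  assert (Hparts := RInt_lincomb (gamma_integrand (s + 1)) (gamma_integrand s) a T 1 (- s)
                      (Hex _) (Hex _)).
  rewrite (RInt_derive_R (fun t => - (Rpower t s * exp (- t)))) in Hparts; [lra| |].
  - intros x Hx. rewrite !gamma_integrand_Rpower by lra. unfold Rpower.
    auto_derive; [lra|].
    replace (s + 1 - 1) with s by ring.
    replace (exp (s * ln x)) with (exp ((s - 1) * ln x) * x)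
      by (rewrite <- (exp_ln x) at 2 by lra; rewrite <- exp_plus; f_equal; ring).
    field. lra.
  - intros x Hx.
    apply (continuous_plus (fun t => 1 * gamma_integrand (s + 1) t)
                           (fun t => - s * gamma_integrand s t));
      apply (continuous_scal_r (K:=R_AbsRing) (V:=R_NormedModule)), continuous_gamma_integrand; lra.
Qed.

Lemma Rpower_exp_neg_lt s eps T : 0 < eps -> 1 <= T -> 2 * (2 * s ^ 2 - ln eps) < T ->
  Rpower T s * exp (- T) < eps.
Proof.
  intros He HT HT2.
  apply Rle_lt_trans with (exp (T / 2 + 2 * s ^ 2) * exp (- T)).
  - apply Rmult_le_compat_r; [left; apply exp_pos|apply Rpower_le_exp_half; auto].
  - rewrite <- exp_plus, <- (exp_ln eps) by auto. apply exp_increasing. lra.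
Qed.

Lemma Gamma_succ s : 0 < s -> Gamma (s + 1) = s * Gamma s.
Proof.
  intros Hs. apply IntR_plus_eq. fold (gamma_integrand (s + 1)).
  intros eps Heps. set (e := eps / 3). assert (He : 0 < e) by (unfold e; lra).
  assert (Hes : 0 < e / (s + 1)) by (apply Rdiv_lt_0_compat; lra).
  set (C := Rmax 1 (2 * (2 * s ^ 2 - ln e))).
  assert (HC : 1 <= C /\ 2 * (2 * s ^ 2 - ln e) <= C) by (split; [apply Rmax_l|apply Rmax_r]).
  generalize (near_0_inf_and _ _ (proj1 (Gamma_improper s Hs) _ Hes)
    (near_0_inf_window _ C (Rpower_pos e (/ s)))).
  apply near_0_inf_impl. intros a T Ha [Happrox [Ha' HT]].
  rewrite Int_RInt in * by (apply ex_RInt_gamma_integrand; lra).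
  rewrite RInt_gamma_integrand_succ by lra.
  assert (Hbdry0 : 0 < Rpower a s * exp (- a) < e).
  { split; [apply Rmult_lt_0_compat; [apply Rpower_pos|apply exp_pos]|].
    apply Rle_lt_trans with (Rpower a s); [|apply Rpower_lt_of_lt_root; auto].
    pose proof (Rpower_pos a s). pose proof (exp_le_1 (- a) ltac:(lra)). nra. }
  assert (Hbdry1 : 0 < Rpower T s * exp (- T) < e).
  { split; [apply Rmult_lt_0_compat; [apply Rpower_pos|apply exp_pos]|].
    apply Rpower_exp_neg_lt; auto; lra. }
  assert (Hscaled : Rabs (s * (RInt (gamma_integrand s) a T - Gamma s)) < e).
  { rewrite Rabs_mult, Rabs_pos_eq by lra.
    apply Rle_lt_trans with (s * (e / (s + 1))); [apply Rmult_le_compat_l; lra|].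
    apply Rmult_lt_reg_r with (s + 1); [lra|]. field_simplify; nra. }
  apply Rabs_def2 in Hscaled. apply Rabs_def1; unfold e in *; lra.
Qed.

Lemma Gamma_1 : Gamma 1 = 1.
Proof.
  apply IntR_plus_eq.
  intros eps Heps. exists (Rmin 1 (eps / 2)). split; [apply Rmin_glb_lt; lra|].
  exists (Rmax 1 (- ln (eps / 2))). intros a T Ha HT.
  pose proof (Rmin_l 1 (eps / 2)). pose proof (Rmin_r 1 (eps / 2)).
  pose proof (Rmax_l 1 (- ln (eps / 2))). pose proof (Rmax_r 1 (- ln (eps / 2))).
  rewrite (Int_ext_RInt _ (fun t => exp (- t))); [| lra | |].
  - rewrite (RInt_derive_R (fun t => - exp (- t))).
    + pose proof (exp_ineq1_le (- a)). pose proof (exp_le_1 (- a) ltac:(lra)).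
      assert (exp (- T) < eps / 2).
      { rewrite <- (exp_ln (eps / 2)) by lra. apply exp_increasing. lra. }
      pose proof (exp_pos (- T)). apply Rabs_def1; lra.
    + intros x _. auto_derive; auto. ring.
    + intros x _. apply ex_derive_cont. auto_derive; auto.
  - apply ex_RInt_cont; intros; apply ex_derive_cont; auto_derive; auto.
  - intros t Ht. replace (1 - 1) with 0 by ring. rewrite rpow_0r. apply Rmult_1_l.
Qed.

Lemma le_weighted_mean A B C l : 0 < A -> 0 < l -> A * B = C * C ->
  C <= l / 2 * A + / (2 * l) * B.
Proof.
  intros HA Hl HAB.
  assert (Hsq : A * (l * l * A + B - 2 * l * C) = (l * A - C) ^ 2)
    by (transitivity (l * l * A * A + A * B - 2 * l * A * C); [ring|rewrite HAB; ring]).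
  assert (2 * l * C <= l * l * A + B) by (pose proof (pow2_ge_0 (l * A - C)); nra).
  apply Rmult_le_reg_l with (2 * l); [lra|].
  replace (2 * l * (l / 2 * A + / (2 * l) * B)) with (l * l * A + B) by (field; lra). lra.
Qed.

(* Log-convexity of Gamma, obtained by integrating the pointwise
   AM-GM bound [t^(s-1) <= l/2 t^(s-3/2) + 1/(2l) t^(s-1/2)]
   with [l = Gamma (s + 1/2) / Gamma s]. *)
Lemma Gamma_sqr_le s : 1 / 2 < s -> Gamma s ^ 2 <= Gamma (s - 1 / 2) * Gamma (s + 1 / 2).
Proof.
  intros Hs.
  assert (HG := Gamma_gt_0 s ltac:(lra)).
  assert (HGl := Gamma_gt_0 (s - 1 / 2) ltac:(lra)).
  assert (HGr := Gamma_gt_0 (s + 1 / 2) ltac:(lra)).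
  set (l := Gamma (s + 1 / 2) / Gamma s).
  assert (Hl : 0 < l) by (unfold l; apply Rdiv_lt_0_compat; auto).
  assert (Hmean : Gamma s <= l / 2 * Gamma (s - 1 / 2) + / (2 * l) * Gamma (s + 1 / 2)).
  { apply (improper_0_inf_le_lincomb (gamma_integrand s) (gamma_integrand (s - 1 / 2))
      (gamma_integrand (s + 1 / 2)));
      try apply Gamma_improper; try lra; [left; apply Rinv_0_lt_compat; lra|].
    intros a T Ha HT.
    assert (Hex : forall u, ex_RInt (gamma_integrand u) a T)
      by (intros; apply ex_RInt_gamma_integrand; lra).
    rewrite !Int_RInt, <- RInt_lincomb by auto.
    apply RInt_le; try lra; auto; [apply ex_RInt_lincomb; auto|].
    intros t Ht. rewrite !gamma_integrand_Rpower by lra.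
    assert (Rpower t (s - 1) <=
            l / 2 * Rpower t (s - 1 / 2 - 1) + / (2 * l) * Rpower t (s + 1 / 2 - 1)).
    { apply le_weighted_mean; auto using Rpower_pos.
      rewrite <- !Rpower_plus. f_equal. ring. }
    pose proof (exp_pos (- t)). nra. }
  replace (l / 2 * Gamma (s - 1 / 2) + / (2 * l) * Gamma (s + 1 / 2))
    with ((Gamma (s - 1 / 2) * Gamma (s + 1 / 2) / Gamma s + Gamma s) / 2) in Hmean
    by (unfold l; field; lra).
  apply Rmult_le_reg_r with (/ Gamma s); [apply Rinv_0_lt_compat, HG|].
  replace (Gamma s ^ 2 * / Gamma s) with (Gamma s) by (field; lra). lra.
Qed.

Lemma Gamma_succ_sqr_bounds y : 1 / 2 <= y ->
  y * Gamma (y + 1 / 2) ^ 2 <= Gamma (y + 1) ^ 2 <= (y + 1 / 2) * Gamma (y + 1 / 2) ^ 2.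
Proof.
  intros Hy. split.
  - pose proof (Gamma_sqr_le (y + 1 / 2) ltac:(lra)) as H.
    replace (y + 1 / 2 - 1 / 2) with y in H by field.
    replace (y + 1 / 2 + 1 / 2) with (y + 1) in H by field.
    rewrite Gamma_succ in * by lra.
    pose proof (Gamma_gt_0 y ltac:(lra)). simpl in *. nra.
  - pose proof (Gamma_sqr_le (y + 1) ltac:(lra)) as H.
    replace (y + 1 - 1 / 2) with (y + 1 / 2) in H by field.
    replace (y + 1 + 1 / 2) with (y + 1 / 2 + 1) in H by field.
    rewrite (Gamma_succ (y + 1 / 2)) in H by lra. simpl in *. nra.
Qed.

(** * A symmetric Beta integral *)

Definition bump (s : R) : R := 4 * s * (1 - s).

(* [sym_beta b = 4^(b - 1/2) * B(b + 1/2, b + 1/2)]: the total mass of the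
   Bessel-Kingman kernel after the substitution [z^2 = (x-y)^2 + 4xy s]. *)
Definition sym_beta (b : R) : R := RInt (fun s => rpow (bump s) (b - 1 / 2)) 0 1.

Lemma bump_01 s : 0 <= s <= 1 -> 0 <= bump s <= 1.
Proof. unfold bump; intros; split; [nra|]. pose proof (pow2_ge_0 (2 * s - 1)). nra. Qed.

Lemma continuous_rpow_bump q x : 0 <= q -> continuous (fun s => rpow (bump s) q) x.
Proof.
  intros Hq. apply (continuous_comp bump (fun w => rpow w q)).
  - apply ex_derive_cont. unfold bump. auto_derive. auto.
  - apply continuous_rpow; auto.
Qed.

Lemma ex_RInt_rpow_bump q a b : 0 <= q -> ex_RInt (fun s => rpow (bump s) q) a b.
Proof. intros; apply ex_RInt_cont; intros; apply continuous_rpow_bump; auto. Qed.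

Lemma sym_beta_half : sym_beta (1 / 2) = 1.
Proof.
  unfold sym_beta. rewrite (RInt_ext _ (fun _ => 1)).
  - rewrite (RInt_const (V:=R_CompleteNormedModule)).
    change (scal (1 - 0) 1) with ((1 - 0) * 1). ring.
  - intros. replace (1 / 2 - 1 / 2) with 0 by ring. apply rpow_0r.
Qed.

Lemma sym_beta_gt_0 b : 1 / 2 <= b -> 0 < sym_beta b.
Proof.
  intros Hb. apply RInt_gt_0; [lra| |intros; apply continuous_rpow_bump; lra].
  intros x Hx. rewrite rpow_pos by (unfold bump; nra). apply Rpower_pos.
Qed.

Lemma sym_beta_antitone b1 b2 : 1 / 2 <= b1 -> b1 <= b2 -> sym_beta b2 <= sym_beta b1.
Proof.
  intros H1 H2. apply RInt_le; try lra; try (apply ex_RInt_rpow_bump; lra).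
  intros x Hx. assert (Hw := bump_01 x ltac:(lra)).
  rewrite !rpow_pos by (unfold bump; nra). unfold Rpower. apply exp_le.
  assert (ln (bump x) <= 0) by (rewrite <- ln_1; apply ln_le; unfold bump in *; nra). nra.
Qed.

Lemma is_derive_bump_primitive p x : 0 < x < 1 ->
  is_derive (fun s => (s - 1 / 2) * rpow (bump s) (p + 1)) x
    ((2 * p + 3) * rpow (bump x) (p + 1) + - (2 * (p + 1)) * rpow (bump x) p).
Proof.
  intros Hx.
  assert (Hloc : forall y, 0 < y < 1 -> 0 < bump y) by (unfold bump; intros; nra).
  apply (is_derive_ext_loc (fun s => (s - 1 / 2) * Rpower (bump s) (p + 1))).
  { exists (mkposreal _ (Rmin_glb_lt x (1 - x) 0 ltac:(lra) ltac:(lra))).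
    intros y Hy. change (Rabs (y - x) < Rmin x (1 - x)) in Hy.
    pose proof (Rmin_l x (1 - x)); pose proof (Rmin_r x (1 - x)). apply Rabs_def2 in Hy.
    rewrite rpow_pos; auto. apply Hloc; lra. }
  pose proof (Hloc x Hx) as Hwx. rewrite !rpow_pos by auto. unfold Rpower, bump in *.
  auto_derive; [lra|]. replace (1 + - x) with (1 - x) by ring.
  replace (exp ((p + 1) * ln (4 * x * (1 - x))))
    with (exp (p * ln (4 * x * (1 - x))) * (4 * x * (1 - x)))
    by (rewrite <- (exp_ln (4 * x * (1 - x))) at 2 by lra; rewrite <- exp_plus; f_equal; ring).
  field. split; lra.
Qed.

(* Integration by parts against the primitive above, which vanishes at both
   ends; its derivative simplifies because [(s - 1/2)^2 = (1 - bump s) / 4]. *)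
Lemma sym_beta_succ b : 1 / 2 <= b ->
  sym_beta (b + 1) = (2 * b + 1) / (2 * b + 2) * sym_beta b.
Proof.
  intros Hb. set (p := b - 1 / 2). assert (Hp : 0 <= p) by (unfold p; lra).
  assert (Hparts : RInt (fun s => (2 * p + 3) * rpow (bump s) (p + 1)
                                  + - (2 * (p + 1)) * rpow (bump s) p) 0 1 = 0).
  { rewrite (RInt_derive_interior (fun s => (s - 1 / 2) * rpow (bump s) (p + 1))); try lra.
    - unfold bump. rewrite !rpow_nonpos by lra. lra.
    - apply is_derive_bump_primitive.
    - intros x _. apply (continuous_mult (fun s => s - 1 / 2)); [|apply continuous_rpow_bump; lra].
      apply ex_derive_cont; auto_derive; auto.
    - intros x. apply (continuous_plus (fun s => (2 * p + 3) * rpow (bump s) (p + 1)));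
        apply (continuous_scal_r (K:=R_AbsRing) (V:=R_NormedModule)), continuous_rpow_bump; lra. }
  rewrite RInt_lincomb in Hparts by (apply ex_RInt_rpow_bump; lra).
  unfold sym_beta. replace (b + 1 - 1 / 2) with (p + 1) by (unfold p; ring). fold p.
  apply Rmult_eq_reg_l with (2 * b + 2); [|lra].
  replace ((2 * b + 2) * ((2 * b + 1) / (2 * b + 2) * RInt (fun s => rpow (bump s) p) 0 1))
    with ((2 * b + 1) * RInt (fun s => rpow (bump s) p) 0 1) by (field; lra).
  unfold p in *. nra.
Qed.

Lemma sym_beta_add_nat_ge b N : 1 / 2 <= b ->
  ((2 * b + 1) / (2 * b + 2)) ^ N * sym_beta b <= sym_beta (b + INR N).
Proof.
  intros Hb. set (r := (2 * b + 1) / (2 * b + 2)).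
  assert (Hr : 0 < r <= 1).
  { unfold r; split; [apply Rdiv_lt_0_compat; lra|].
    apply Rmult_le_reg_r with (2 * b + 2); [lra|]. field_simplify; lra. }
  induction N as [|N IH]; [simpl; rewrite Rplus_0_r; lra|].
  rewrite S_INR, <- Rplus_assoc. pose proof (pos_INR N).
  rewrite sym_beta_succ by lra.
  assert (r <= (2 * (b + INR N) + 1) / (2 * (b + INR N) + 2)).
  { unfold r. apply Rmult_le_reg_r with ((2 * b + 2) * (2 * (b + INR N) + 2)); [nra|].
    field_simplify; nra. }
  pose proof (sym_beta_gt_0 b Hb).
  assert (0 <= r ^ N * sym_beta b) by (apply Rmult_le_pos; [apply pow_le|]; lra).
  simpl. nra.
Qed.

Lemma pow_ge_1_sub_lin q n : 0 <= q <= 1 -> 1 - INR n * (1 - q) <= q ^ n.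
Proof.
  intros Hq. induction n as [|n IH]; [simpl; lra|].
  rewrite S_INR. simpl. pose proof (pos_INR n).
  assert (q * (1 - INR n * (1 - q)) <= q * q ^ n) by (apply Rmult_le_compat_l; lra).
  assert (0 <= INR n * ((1 - q) * (1 - q))) by (apply Rmult_le_pos; nra).
  nra.
Qed.

(** * Normalization of the kernel *)

Definition gamma_ratio (a : R) : R := 2 * Gamma (a + 1) * sym_beta a / Gamma (a + 1 / 2).

Lemma gamma_ratio_succ a : 1 / 2 <= a -> gamma_ratio (a + 1) = gamma_ratio a.
Proof.
  intros Ha. unfold gamma_ratio.
  rewrite (Gamma_succ (a + 1)), sym_beta_succ by lra.
  replace (a + 1 + 1 / 2) with (a + 1 / 2 + 1) by ring.
  rewrite (Gamma_succ (a + 1 / 2)) by lra.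
  pose proof (Gamma_gt_0 (a + 1 / 2) ltac:(lra)).
  field. lra.
Qed.

Lemma gamma_ratio_add_nat a k : 1 / 2 <= a -> gamma_ratio (a + INR k) = gamma_ratio a.
Proof.
  intros Ha. induction k as [|k IH]; [simpl; rewrite Rplus_0_r; auto|].
  rewrite S_INR, <- Rplus_assoc, gamma_ratio_succ; auto. pose proof (pos_INR k). lra.
Qed.

Lemma gamma_ratio_half : gamma_ratio (1 / 2) = Gamma (1 / 2).
Proof.
  unfold gamma_ratio. rewrite Gamma_succ, sym_beta_half by lra.
  replace (1 / 2 + 1 / 2) with 1 by field. rewrite Gamma_1. field.
Qed.

Lemma gamma_ratio_sqr_bounds y : 1 / 2 <= y ->
  4 * y * sym_beta y ^ 2 <= gamma_ratio y ^ 2 <= 4 * (y + 1 / 2) * sym_beta y ^ 2.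
Proof.
  intros Hy. destruct (Gamma_succ_sqr_bounds y Hy) as [Hlo Hhi].
  assert (HG0 : Gamma (y + 1 / 2) <> 0) by (apply Rgt_not_eq, Gamma_gt_0; lra).
  assert (HG : 0 < Gamma (y + 1 / 2) ^ 2) by (apply pow_lt, Gamma_gt_0; lra).
  assert (Hsq : gamma_ratio y ^ 2 =
                4 * sym_beta y ^ 2 * (Gamma (y + 1) ^ 2 / Gamma (y + 1 / 2) ^ 2))
    by (unfold gamma_ratio; field; auto).
  assert (HU : 0 <= 4 * sym_beta y ^ 2) by (pose proof (pow2_ge_0 (sym_beta y)); lra).
  rewrite Hsq. split.
  - replace (4 * y * sym_beta y ^ 2)
      with (4 * sym_beta y ^ 2 * (y * Gamma (y + 1 / 2) ^ 2 / Gamma (y + 1 / 2) ^ 2))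
      by (field; auto).
    apply Rmult_le_compat_l, Rmult_le_compat_r; [| left; apply Rinv_0_lt_compat |]; auto.
  - replace (4 * (y + 1 / 2) * sym_beta y ^ 2)
      with (4 * sym_beta y ^ 2 * ((y + 1 / 2) * Gamma (y + 1 / 2) ^ 2 / Gamma (y + 1 / 2) ^ 2))
      by (field; auto).
    apply Rmult_le_compat_l, Rmult_le_compat_r; [| left; apply Rinv_0_lt_compat |]; auto.
Qed.

(* Along [a + k] and [1/2 + k] the ratio of the periodic function
   [gamma_ratio] is squeezed: log-convexity pins the Gamma quotients up to a
   factor [1 + O(1/k)], and [sym_beta] varies by a bounded number [N] of
   factors [1 - O(1/k)] between the two points. *)
Lemma gamma_ratio_sqr_squeeze a N k : 1 / 2 <= a -> a - 1 / 2 <= INR N ->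
  1 - (2 * INR N + 1) / (2 * INR k + 2) <= (gamma_ratio a / Gamma (1 / 2)) ^ 2 <=
  1 + a / (INR k + 1 / 2).
Proof.
  intros Ha HN. pose proof (pos_INR k) as Hk.
  set (y := a + INR k). set (b := 1 / 2 + INR k).
  assert (Hb : 1 / 2 <= b) by (unfold b; lra).
  assert (Hyb : b <= y <= b + INR N) by (unfold y, b; lra).
  set (r2 := (gamma_ratio a / Gamma (1 / 2)) ^ 2).
  assert (Hr2 : r2 * gamma_ratio b ^ 2 = gamma_ratio y ^ 2).
  { unfold r2, y, b. rewrite !gamma_ratio_add_nat, gamma_ratio_half by lra.
    field. apply Rgt_not_eq, Gamma_gt_0; lra. }
  assert (Hr2pos : 0 <= r2) by apply pow2_ge_0.
  destruct (gamma_ratio_sqr_bounds y ltac:(lra)) as [Hy1 Hy2].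
  destruct (gamma_ratio_sqr_bounds b Hb) as [Hb1 Hb2].
  set (Uy := sym_beta y) in *. set (Ub := sym_beta b) in *.
  assert (HUb : 0 < Ub) by (apply sym_beta_gt_0; lra).
  assert (HUy_le : 0 < Uy <= Ub) by (split; [apply sym_beta_gt_0|apply sym_beta_antitone]; lra).
  set (rho := (2 * b + 1) / (2 * b + 2)).
  assert (HUy_ge : rho ^ N * Ub <= Uy).
  { apply Rle_trans with (sym_beta (b + INR N)); [apply sym_beta_add_nat_ge; lra|].
    apply sym_beta_antitone; lra. }
  set (q := b / (b + 1 / 2)).
  assert (Hq : 0 <= q <= 1 /\ q <= rho /\ q * (b + 1 / 2) = b).
  { unfold q, rho. repeat split.
    - apply Rlt_le, Rdiv_lt_0_compat; lra.
    - apply Rmult_le_reg_r with (b + 1 / 2); [lra|]. field_simplify; lra.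
    - apply Rmult_le_reg_r with ((b + 1 / 2) * (2 * b + 2)); [nra|]. field_simplify; nra.
    - field; lra. }
  assert (HUb2 : 0 < Ub ^ 2) by (apply pow_lt; lra).
  split.
  - assert (Hpow : q ^ (2 * N + 1) * (4 * (b + 1 / 2) * Ub ^ 2) <= r2 * (4 * (b + 1 / 2) * Ub ^ 2)).
    { assert (HqN : 0 <= q ^ N <= rho ^ N) by (split; [apply pow_le|apply pow_incr]; lra).
      assert (q ^ N * Ub <= Uy) by nra.
      replace (2 * N + 1)%nat with (S (N + N)) by lia. simpl pow. rewrite pow_add.
      assert (4 * y * (q ^ N * Ub) ^ 2 <= 4 * y * Uy ^ 2)
        by (apply Rmult_le_compat_l; [lra|apply pow_incr; nra]).
      assert (r2 * gamma_ratio b ^ 2 <= r2 * (4 * (b + 1 / 2) * Ub ^ 2))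
        by (apply Rmult_le_compat_l; lra).
      nra. }
    apply Rmult_le_reg_r in Hpow; [|nra].
    pose proof (pow_ge_1_sub_lin q (2 * N + 1) ltac:(lra)).
    replace (INR (2 * N + 1)) with (2 * INR N + 1) in H
      by (rewrite plus_INR, mult_INR; simpl; ring).
    replace (1 - q) with (/ (2 * INR k + 2)) in H by (unfold q, b; field; lra).
    unfold Rdiv. lra.
  - assert (r2 * (4 * b * Ub ^ 2) <= 4 * (y + 1 / 2) * Ub ^ 2).
    { assert (r2 * (4 * b * Ub ^ 2) <= r2 * gamma_ratio b ^ 2) by (apply Rmult_le_compat_l; lra).
      assert (Uy ^ 2 <= Ub ^ 2) by (apply pow_incr; lra). nra. }
    replace (1 + a / (INR k + 1 / 2)) with ((y + 1 / 2) / b) by (unfold y, b; field; lra).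
    apply Rmult_le_reg_r with (4 * b * Ub ^ 2); [nra|].
    replace ((y + 1 / 2) / b * (4 * b * Ub ^ 2)) with (4 * (y + 1 / 2) * Ub ^ 2)
      by (field; lra).
    lra.
Qed.

Lemma eq_1_of_squeeze r a C :
  (forall k, 1 - C / (2 * INR k + 2) <= r <= 1 + a / (INR k + 1 / 2)) -> r = 1.
Proof.
  intros Hsq. destruct (Rtotal_order r 1) as [Hlt|[Heq|Hgt]]; auto; exfalso.
  - destruct (INR_unbounded (C / (1 - r))) as [k Hk].
    destruct (Hsq k) as [H _]. pose proof (pos_INR k).
    assert (C < INR k * (1 - r)).
    { replace C with (C / (1 - r) * (1 - r)) at 1 by (field; lra).
      apply Rmult_lt_compat_r; lra. }
    assert (1 - r <= C / (2 * INR k + 2)) by lra.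
    apply Rmult_le_compat_r with (r := 2 * INR k + 2) in H2; [|lra].
    replace (C / (2 * INR k + 2) * (2 * INR k + 2)) with C in H2 by (field; lra). nra.
  - destruct (INR_unbounded (a / (r - 1))) as [k Hk].
    destruct (Hsq k) as [_ H]. pose proof (pos_INR k).
    assert (a < INR k * (r - 1)).
    { replace a with (a / (r - 1) * (r - 1)) at 1 by (field; lra).
      apply Rmult_lt_compat_r; lra. }
    assert (r - 1 <= a / (INR k + 1 / 2)) by lra.
    apply Rmult_le_compat_r with (r := INR k + 1 / 2) in H2; [|lra].
    replace (a / (INR k + 1 / 2) * (INR k + 1 / 2)) with a in H2 by (field; lra). nra.
Qed.

Lemma gamma_ratio_const a : 1 / 2 <= a -> gamma_ratio a = Gamma (1 / 2).
Proof.
  intros Ha. destruct (INR_unbounded a) as [N HN].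
  assert (Hsq : (gamma_ratio a / Gamma (1 / 2)) ^ 2 = 1).
  { apply (eq_1_of_squeeze _ a (2 * INR N + 1)). intros k.
    apply gamma_ratio_sqr_squeeze; lra. }
  assert (HG : 0 < Gamma (1 / 2)) by (apply Gamma_gt_0; lra).
  assert (HR : 0 < gamma_ratio a).
  { unfold gamma_ratio. pose proof (Gamma_gt_0 (a + 1) ltac:(lra)).
    pose proof (Gamma_gt_0 (a + 1 / 2) ltac:(lra)). pose proof (sym_beta_gt_0 a Ha).
    apply Rdiv_lt_0_compat; [|lra]. nra. }
  assert (Hq : gamma_ratio a / Gamma (1 / 2) = 1).
  { assert (0 < gamma_ratio a / Gamma (1 / 2)) by (apply Rdiv_lt_0_compat; auto).
    simpl in Hsq. nra. }
  unfold Rdiv in Hq. apply Rmult_eq_reg_r with (/ Gamma (1 / 2)); [|apply Rinv_neq_0_compat; lra].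
  rewrite Rinv_r by lra. exact Hq.
Qed.

Lemma kernel_normalization a : 1 / 2 <= a -> CGamma a * Rpower 2 (2 * a) * sym_beta a = 1.
Proof.
  intros Ha. pose proof (gamma_ratio_const a Ha) as H. unfold gamma_ratio in H. unfold CGamma.
  rewrite rpow_pos by lra.
  rewrite (Rpower_pred 2 (2 * a)) by lra.
  pose proof (Rpower_pos 2 (2 * a - 1)).
  pose proof (Gamma_gt_0 (a + 1 / 2) ltac:(lra)). pose proof (Gamma_gt_0 (a + 1) ltac:(lra)).
  pose proof (sym_beta_gt_0 a Ha).
  rewrite <- H. field. repeat split; lra.
Qed.

(** * Translation and convolution *)

Definition kernel_profile al x y u : R :=
  rpow ((u - (x - y) ^ 2) * ((x + y) ^ 2 - u)) (al - 1 / 2).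

Lemma continuous_kernel_profile al x y u : 1 / 2 <= al ->
  continuous (kernel_profile al x y) u.
Proof.
  intros Hal.
  apply (continuous_comp (fun u => (u - (x - y) ^ 2) * ((x + y) ^ 2 - u))
                         (fun w => rpow w (al - 1 / 2))).
  - apply ex_derive_cont. auto_derive. auto.
  - apply continuous_rpow; lra.
Qed.

Lemma continuous_kernel_density al x y z : 1 / 2 <= al ->
  continuous (fun z => 2 * z * kernel_profile al x y (z ^ 2)) z.
Proof.
  intros Hal. apply (continuous_mult (fun z => 2 * z)).
  - apply ex_derive_cont; auto_derive; auto.
  - apply (continuous_comp (fun z => z ^ 2)); [apply ex_derive_cont; auto_derive; auto|].
    apply continuous_kernel_profile, Hal.
Qed.

Lemma Kker_mul_rpow al x y z : 1 / 2 <= al -> 0 < x -> 0 < y -> 0 <= z ->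
  Kker al x y z * rpow z (2 * al + 1) =
  CGamma al / Rpower (x * y) (2 * al) / 2 * (2 * z * kernel_profile al x y (z ^ 2)).
Proof.
  intros Hal Hx Hy Hz. unfold Kker, kernel_profile.
  destruct (Req_dec z 0) as [->|Hz0].
  - rewrite (rpow_nonpos 0 (2 * al + 1)) by lra. ring.
  - rewrite (rpow_pos (x * y * z)), (rpow_pos z) by (repeat apply Rmult_lt_0_compat; lra).
    rewrite <- Rpower_mult_distr, Rpower_plus, Rpower_1 by (try apply Rmult_lt_0_compat; lra).
    pose proof (Rpower_pos (x * y) (2 * al)). pose proof (Rpower_pos z (2 * al)).
    field. split; lra.
Qed.

(* Substituting [z^2 = (x-y)^2 + 4xy s] factors [(2xy)^2 bump s] out of
   the profile. *)
Lemma RInt_kernel_density al x y : 1 / 2 <= al -> 0 < x -> 0 < y ->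
  RInt (fun z => 2 * z * kernel_profile al x y (z ^ 2)) (Rabs (x - y)) (x + y) =
  4 * x * y * Rpower (2 * x * y) (2 * al - 1) * sym_beta al.
Proof.
  intros Hal Hx Hy.
  set (F := kernel_profile al x y).
  assert (HFc : forall u, continuous F u) by (intros; apply continuous_kernel_profile, Hal).
  assert (Hsq : RInt (fun z => 2 * z * F (z ^ 2)) (Rabs (x - y)) (x + y) =
                RInt F ((x - y) ^ 2) ((x + y) ^ 2)).
  { replace ((x - y) ^ 2) with (Rabs (x - y) ^ 2) by apply pow2_abs.
    apply (RInt_comp (V:=R_CompleteNormedModule) F (fun z => z ^ 2) (fun z => 2 * z)).
    - intros; apply HFc.
    - intros z _; split; [auto_derive; auto; ring|apply ex_derive_cont; auto_derive; auto]. }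
  rewrite Hsq.
  set (u := 4 * x * y).
  assert (Hlin := RInt_comp_lin (V:=R_CompleteNormedModule) F u ((x - y) ^ 2) 0 1).
  replace (u * 0 + (x - y) ^ 2) with ((x - y) ^ 2) in Hlin by ring.
  replace (u * 1 + (x - y) ^ 2) with ((x + y) ^ 2) in Hlin by (unfold u; ring).
  rewrite <- Hlin by (apply ex_RInt_cont; intros; apply HFc).
  rewrite (RInt_ext _
    (fun s => (u * Rpower (2 * x * y) (2 * al - 1)) * rpow (bump s) (al - 1 / 2))).
  - apply (RInt_scal (V:=R_CompleteNormedModule)), ex_RInt_rpow_bump; lra.
  - intros s _. unfold F, kernel_profile. change (scal u ?v) with (u * v).
    rewrite Rmult_assoc. f_equal.
    replace (2 * al - 1) with (2 * (al - 1 / 2)) by field.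
    rewrite <- Rpower_sqr, <- rpow_mult_distr_l by (try apply pow_lt; nra).
    f_equal. unfold u, bump. ring.
Qed.

(* Stated at type [R] rather than Coquelicot's normed-module carrier, so
   that [field] recognizes the equation. *)
Lemma RInt_Kker al x y : 1 / 2 <= al -> 0 < x -> 0 < y ->
  RInt (fun z => CGamma al / Rpower (x * y) (2 * al) / 2 * (2 * z * kernel_profile al x y (z ^ 2)))
    (Rabs (x - y)) (x + y) = 1 :> R.
Proof.
  intros Hal Hx Hy.
  rewrite (RInt_scal (V:=R_CompleteNormedModule) (fun z => 2 * z * kernel_profile al x y (z ^ 2)))
    by (apply ex_RInt_cont; intros; apply continuous_kernel_density, Hal).
  change (scal ?c ?v) with (c * v). rewrite RInt_kernel_density by auto.
  transitivity (CGamma al * Rpower 2 (2 * al) * sym_beta al); [|apply kernel_normalization, Hal].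
  rewrite (Rpower_pred 2 (2 * al)), (Rpower_pred (x * y) (2 * al)) by nra.
  replace (2 * x * y) with (2 * (x * y)) by ring.
  rewrite <- (Rpower_mult_distr 2 (x * y)) by nra.
  pose proof (Rpower_pos (x * y) (2 * al - 1)).
  field. nra.
Qed.

Lemma tau_eq_1 al f x y : 1 / 2 <= al -> 0 < x -> 0 < y ->
  (forall z, Rabs (x - y) <= z <= x + y -> f z = 1) -> tau al f x y = 1.
Proof.
  intros Hal Hx Hy Hf. unfold tau.
  destruct (Req_dec_T x 0); [lra|]. destruct (Req_dec_T y 0); [lra|].
  etransitivity; [|apply (RInt_Kker al x y Hal Hx Hy)].
  apply Int_ext_RInt.
  - apply Rabs_le; lra.
  - apply ex_RInt_cont; intros. apply (continuous_scal_r (K:=R_AbsRing) (V:=R_NormedModule)).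
    apply continuous_kernel_density, Hal.
  - intros z Hz. pose proof (Rabs_pos (x - y)).
    rewrite Hf, Rmult_1_r, Kker_mul_rpow by (auto; lra). reflexivity.
Qed.

Lemma tau_ind_cc al lo hi x y : 1 / 2 <= al -> 0 <= x -> 0 < y ->
  lo <= Rabs (x - y) -> x + y <= hi -> tau al (ind_cc lo hi) x y = 1.
Proof.
  intros Hal Hx Hy Hlo Hhi.
  assert (Hind : forall z, lo <= z <= hi -> ind_cc lo hi z = 1)
    by (intros z Hz; unfold ind_cc; destruct Rle_dec; [destruct Rle_dec|]; lra).
  destruct (Req_dec x 0) as [->|Hx0].
  - unfold tau. destruct (Req_dec_T 0 0); [|congruence].
    rewrite Rminus_0_l, Rabs_Ropp, Rabs_pos_eq in Hlo by lra. apply Hind; lra.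
  - apply tau_eq_1; auto; [lra|]. intros z Hz. apply Hind; lra.
Qed.

Lemma omega1_eq al : 1 / 2 <= al -> omega1 al = RInt (fun y => rpow y (2 * al + 1)) 0 1.
Proof. intros; apply Int_RInt, ex_RInt_cont; intros; apply continuous_rpow; lra. Qed.

Lemma conv_eq_1 al f2 x : 1 / 2 <= al ->
  (forall y, 0 < y < 1 -> tau al f2 x y = 1) ->
  conv al (fun y => / omega1 al * ind_co 0 1 y) f2 x = 1.
Proof.
  intros Hal Htau.
  set (h := fun y => / omega1 al * rpow y (2 * al + 1)).
  assert (Hpow : forall y, continuous (fun y => rpow y (2 * al + 1)) y)
    by (intros; apply continuous_rpow; lra).
  assert (Hw : 0 < omega1 al).
  { rewrite omega1_eq by auto. apply RInt_gt_0; [lra| |auto].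
    intros y Hy. rewrite rpow_pos by lra. apply Rpower_pos. }
  assert (Hh : RInt h 0 1 = 1 :> R).
  { unfold h. rewrite (RInt_scal (V:=R_CompleteNormedModule)) by (apply ex_RInt_cont; auto).
    change (scal ?c ?v) with (c * v). rewrite <- omega1_eq by auto. field. lra. }
  unfold conv. apply IntR_plus_eq.
  apply (improper_0_inf_compact_support _ h 1); [lra| |auto|intros y Hy; unfold ind_co..].
  - intros y. apply (continuous_scal_r (K:=R_AbsRing) (V:=R_NormedModule)), Hpow.
  - rewrite Htau by auto. destruct Rle_dec; [destruct Rlt_dec|]; unfold h; lra.
  - destruct Rle_dec; [destruct Rlt_dec|]; lra.
Qed.

Theorem mainTheorem11 (alpha : R) (halpha : 1/2 <= alpha) (n : nat) (hn : (1 <= n)%nat)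
  (x : R) (hx : INR n - 1 <= x < INR n) :
  g alpha n x = 1.
Proof.
  destruct n as [|[|n]]; [lia| |]; unfold g; apply conv_eq_1; auto; intros y Hy.
  - simpl in hx. apply tau_ind_cc; [auto|lra|lra|apply Rabs_pos|lra].
  - assert (2 <= INR (S (S n))) by (rewrite !S_INR; pose proof (pos_INR n); lra).
    pose proof (RRle_abs (x - y)). apply tau_ind_cc; auto; lra.
Qed.
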